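(* Let $H$ be a $\{P,C\}$-free 3-graph on vertex set $V$, let $e_1,e_2\in H$ with $e_1\cap e_2=\{x\}$, and set $U=e_1\cup e_2$ (so $|U|=5$) and $W=V\setminus U$. If $H[W]$ contains a copy $Q$ of $P^3_2$, then the number of edges of $H$ meeting both $U$ and $V(Q)$ is at most $4$.
   Context: All hypergraphs are 3-uniform; $H[S]$ is the sub-3-graph induced on $S$. $P$ is the loose 3-uniform path of length 3: vertices $a,b,c,d,e,f,g$, edges $\{a,b,c\},\{c,d,e\},\{e,f,g\}$. $C$ is the loose triangle: vertices $x_1,x_2,x_3,y_1,y_2,y_3$, edges $\{x_1,y_3,x_2\},\{x_2,y_1,x_3\},\{x_3,y_2,x_1\}$. $P^3_2$ is two edges sharing exactly one vertex (5 vertices). $\{P,C\}$-free means containing no copy of $P$ and no copy of $C$. *)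

From mathcomp Require Import all_boot.
Set Implicit Arguments. Unset Strict Implicit. Unset Printing Implicit Defensive.

Definition uniform3 (V : finType) (H : {set {set V}}) : Prop :=
  forall e, e \in H -> #|e| = 3.

Definition has_P (V : finType) (H : {set {set V}}) : Prop :=
  exists a b c d e f g : V,
    uniq [:: a; b; c; d; e; f; g] /\
    [set a; b; c] \in H /\ [set c; d; e] \in H /\ [set e; f; g] \in H.

Definition has_C (V : finType) (H : {set {set V}}) : Prop :=
  exists x1 x2 x3 y1 y2 y3 : V,
    uniq [:: x1; x2; x3; y1; y2; y3] /\
    [set x1; y3; x2] \in H /\ [set x2; y1; x3] \in H /\ [set x3; y2; x1] \in H.

Definition PC_free (V : finType) (H : {set {set V}}) : Prop :=
  ~ has_P H /\ ~ has_C H.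

Definition induced (V : finType) (H : {set {set V}}) (S : {set V}) : {set {set V}} :=
  [set e in H | e \subset S].

Definition n_meet_both (V : finType) (H : {set {set V}}) (A B : {set V}) : nat :=
  #|[set e in H | (e :&: A != set0) && (e :&: B != set0)]|.

(** The edges meeting both [U = e1 ∪ e2] and [V(Q) = q1 ∪ q2] are controlled by one
    observation: three edges [g1, g2, g3] with [|g1 ∩ g2| = |g2 ∩ g3| = 1] and
    [g1 ∩ g3 = ∅] form a copy of [P].  An edge [f] meeting both sides therefore cannot
    meet each in a single vertex, since it would link an edge inside [U] to one inside
    [V(Q)].  If [f] has two vertices in [U], the single vertex of [f] in [V(Q)] must be
    the centre [y] of [Q] (else [f, q_i, q_j] is a [P]), and [f] meets neither [e_i] in
    exactly one vertex (else [e_i, f, q] is a [P]), so [f = (e_i \ x) ∪ {y}].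
    Symmetrically for two vertices in [V(Q)], which leaves only four possible edges. *)
From mathcomp Require Import all_boot zify.
Set Implicit Arguments. Unset Strict Implicit. Unset Printing Implicit Defensive.

Section FinsetFacts.
Variable V : finType.
Implicit Types (A B C f g : {set V}) (x u z w : V).

Lemma setI_set1P A B u :
  A :&: B = [set u] -> [/\ u \in A, u \in B & forall z, z \in A -> z \in B -> z = u].
Proof.
move=> AB; have := set11 u; rewrite -AB inE => /andP [uA uB]; split=> // z zA zB.
by apply/set1P; rewrite -AB inE zA zB.
Qed.

Lemma cards1_subset1 C u : C \subset [set u] -> u \in C -> #|C| = 1.
Proof.
move=> Cu uC; suff -> : C = [set u] by rewrite cards1.
by apply/eqP; rewrite eqEsubset Cu sub1set.
Qed.

Lemma set3_eq_of_card3 g (a b c : V) : uniq [:: a; b; c] ->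
  a \in g -> b \in g -> c \in g -> #|g| = 3 -> [set a; b; c] = g.
Proof.
move=> abc ag bg cg g3; apply/eqP; rewrite eqEcard g3; apply/andP; split.
  by apply/subsetP => z; rewrite !inE => /orP [/orP [] | ] /eqP ->.
rewrite -setUA !cardsU1 cards1 !inE.
by move: abc; rewrite /= !inE negb_or => /and3P [/andP [-> ->] -> _].
Qed.

Lemma card3_D1 g z : #|g| = 3 -> z \in g ->
  exists a b, [/\ uniq [:: a; b; z], a \in g & b \in g].
Proof.
move=> g3 zg; have /cards2P [a [b [ab gz]]] : #|g :\ z| == 2.
  by move: (cardsD1 z g); rewrite g3 zg add1n => -[<-].
have := set21 a b; have := set22 a b; rewrite -gz !inE => /andP [bz bg] /andP [az ag].
by exists a, b; split; rewrite //= !inE negb_or ab az bz.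
Qed.

Lemma card3_D2 g z w : #|g| = 3 -> z \in g -> w \in g -> z != w ->
  exists2 d, uniq [:: z; d; w] & d \in g.
Proof.
move=> g3 zg wg zw; have [a [b [/= + ag bg]]] := card3_D1 g3 zg.
rewrite !inE negb_or => /andP [/andP [ab az] /andP [bz _]].
have [wa | wa] := eqVneq w a.
- by exists b; rewrite //= !inE negb_or zw wa (eq_sym z) bz eq_sym ab.
- by exists a; rewrite //= !inE negb_or zw (eq_sym z) az eq_sym wa.
Qed.

Lemma leq_card_setI_disjoint f A B :
  A :&: B = set0 -> #|f :&: A| + #|f :&: B| <= #|f|.
Proof.
move=> AB; rewrite -cardsUI setIACA setIid AB setI0 cards0 addn0 -setIUr.
exact/subset_leq_card/subsetIl.
Qed.

Lemma setI_disjoint_cover f A B :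
  A :&: B = set0 -> #|f :&: A| + #|f :&: B| = #|f| -> (f :&: A) :|: (f :&: B) = f.
Proof.
move=> AB card_f; apply/eqP; rewrite eqEcard subUset !subsetIl /=.
by rewrite -card_f -cardsUI setIACA setIid AB setI0 cards0 addn0.
Qed.

Lemma cards1_setIU f A B :
  #|f :&: (A :|: B)| = 1 -> #|f :&: A| = 1 \/ #|f :&: B| = 1.
Proof.
move=> /eqP/cards1P [u]; rewrite setIUr => fAB.
have := set11 u; rewrite -fAB inE => /orP [uA | uB].
- by left; apply: cards1_subset1 uA; rewrite -fAB subsetUl.
- by right; apply: cards1_subset1 uB; rewrite -fAB subsetUr.
Qed.

Lemma setIU_card2_left f A B x : #|A| = 3 -> A :&: B = [set x] ->
  #|f :&: (A :|: B)| = 2 -> #|f :&: A| = 2 -> #|f :&: B| != 1 ->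
  f :&: (A :|: B) = A :\ x.
Proof.
move=> A3 /setI_set1P [xA xB xAB] fU2 fA2 fB1.
have fAU : f :&: A = f :&: (A :|: B).
  by apply/eqP; rewrite eqEcard fU2 fA2 leqnn andbT setIS ?subsetUl.
have fBA z : z \in f -> z \in B -> z \in A.
  move=> zf zB; have : z \in f :&: (A :|: B) by rewrite !inE zf zB orbT.
  by rewrite -fAU inE => /andP [].
have xf : x \notin f.
  apply: contra fB1 => xf; apply/eqP/(@cards1_subset1 _ x); last by rewrite inE xf xB.
  by apply/subsetP => z; rewrite !inE => /andP [zf zB]; apply/eqP/xAB/zB/fBA.
rewrite -fAU; apply/eqP; rewrite eqEcard fA2.
have -> : #|A :\ x| = 2 by move: (cardsD1 x A); rewrite A3 xA add1n => -[<-].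
rewrite leqnn andbT; apply/subsetP => z; rewrite !inE => /andP [zf ->].
by rewrite andbT; apply: contraNneq xf => <-.
Qed.

Lemma setIU_card2 f A B x : #|A| = 3 -> #|B| = 3 -> A :&: B = [set x] ->
  #|f :&: (A :|: B)| = 2 -> #|f :&: A| != 1 -> #|f :&: B| != 1 ->
  f :&: (A :|: B) = A :\ x \/ f :&: (A :|: B) = B :\ x.
Proof.
move=> A3 B3 AB fU2 fA1 fB1.
have fA_le2 : #|f :&: A| <= 2 by rewrite -fU2 subset_leq_card ?setIS ?subsetUl.
have [fA2 | fA_ne2] := eqVneq #|f :&: A| 2.
  by left; apply: setIU_card2_left.
right; have fA0 : f :&: A = set0 by apply/eqP; rewrite -cards_eq0; lia.
have fB2 : #|f :&: B| = 2 by move: fU2; rewrite setIUr fA0 set0U.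
by rewrite setUC; apply: setIU_card2_left; rewrite // 1?setUC // setIC.
Qed.

End FinsetFacts.

Ltac distinct_by_membership :=
  rewrite /= ?inE ?negb_or; repeat (apply/andP; split);
  try done; try (rewrite eq_sym; done);
  apply/eqP => E; subst;
  match goal with
  | H1 : is_true (?z \in ?s), H2 : is_true (?z \notin ?s) |- _ => by rewrite H1 in H2
  end.

Section LoosePath.
Variables (V : finType) (H : {set {set V}}).
Hypothesis H3 : uniform3 H.

Lemma set3_in_uniform3 g (u v w : V) : g \in H -> uniq [:: u; v; w] ->
  u \in g -> v \in g -> w \in g -> [set u; v; w] \in H.
Proof. by move=> hg uvw ug vg wg; rewrite (set3_eq_of_card3 uvw ug vg wg) ?H3. Qed.

Lemma has_P_of_chain (E1 E2 E3 : {set V}) : E1 \in H -> E2 \in H -> E3 \in H ->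
  #|E1 :&: E2| = 1 -> #|E2 :&: E3| = 1 -> E1 :&: E3 = set0 -> has_P H.
Proof.
move=> hE1 hE2 hE3 /eqP/cards1P [c /setI_set1P [c1 c2 c12]].
move=> /eqP/cards1P [e /setI_set1P [e2 e3 e23]] E13.
have n13 z : z \in E1 -> z \notin E3.
  by move=> z1; apply/negP => z3; have := in_set0 z; rewrite -E13 inE z1 z3.
have n31 z : z \in E3 -> z \notin E1 by move=> z3; apply: contraL z3; apply: n13.
have n12 z : z \in E1 -> z != c -> z \notin E2 by move=> z1; apply: contra => /(c12 _ z1) ->.
have n21 z : z \in E2 -> z != c -> z \notin E1 by move=> z2; apply: contra => /c12 -> //.
have n32 z : z \in E3 -> z != e -> z \notin E2 by move=> z3; apply: contra => /e23 -> //.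
have n23 z : z \in E2 -> z != e -> z \notin E3 by move=> z2; apply: contra => /(e23 _ z2) ->.
have ce : c != e by apply: contraTneq c1 => ->; apply: n31.
have [a [b [abc a1 b1]]] := card3_D1 (H3 hE1) c1.
have [d cde d2] := card3_D2 (H3 hE2) c2 e2 ce.
have [f [g [fge f3 g3]]] := card3_D1 (H3 hE3) e3.
move: (abc) (cde) (fge); rewrite /= !inE !negb_or.
move=> /andP [/andP [ab ac] /andP [bc _]] /andP [/andP [cd _] /andP [de _]].
move=> /andP [/andP [fg fe] /andP [ge _]].
(* Membership in [E1], [E2], [E3] separates every pair of path vertices except
   [a, b] and [f, g], which are distinct by construction. *)
have a2 := n12 a a1 ac; have b2 := n12 b b1 bc.
have a3 := n13 a a1; have b3 := n13 b b1; have c3 := n13 c c1.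
have d1 : d \notin E1 by apply: n21; rewrite // eq_sym.
have d3 := n23 d d2 de; have e1 := n31 e e3.
have f1 := n31 f f3; have g1 := n31 g g3.
have f2 := n32 f f3 fe; have g2 := n32 g g3 ge.
exists a, b, c, d, e, f, g.
split; first by distinct_by_membership.
split; first exact: set3_in_uniform3 hE1 abc a1 b1 c1.
split; first exact: set3_in_uniform3 hE2 cde c2 d2 e2.
by apply: set3_in_uniform3 hE3 _ e3 f3 g3; distinct_by_membership.
Qed.

Lemma has_P_of_fan_chain (e q1 q2 f : {set V}) :
  e \in H -> q1 \in H -> q2 \in H -> f \in H -> e :&: (q1 :|: q2) = set0 ->
  #|e :&: f| = 1 -> #|f :&: (q1 :|: q2)| = 1 -> has_P H.
Proof.
move=> he hq1 hq2 hf eQ ef /cards1_setIU [] fq.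
- apply: (has_P_of_chain he hf hq1 ef fq).
  by apply/eqP; rewrite -subset0 -eQ setIS ?subsetUl.
- apply: (has_P_of_chain he hf hq2 ef fq).
  by apply/eqP; rewrite -subset0 -eQ setIS ?subsetUr.
Qed.

End LoosePath.

Section PFree.
Variables (V : finType) (H : {set {set V}}).
Hypotheses (H3 : uniform3 H) (noP : ~ has_P H).

Lemma single_meet_fan_center (q1 q2 f : {set V}) y v :
  q1 \in H -> q2 \in H -> f \in H -> q1 :&: q2 = [set y] ->
  f :&: (q1 :|: q2) = [set v] -> v = y.
Proof.
wlog vq1 : q1 q2 / v \in q1.
  move=> sym hq1 hq2 hf q12 fQ; have := set11 v; rewrite -fQ !inE => /andP [_ /orP [] vq].
  - exact: (sym q1 q2).
  - by apply: (sym q2 q1); rewrite // ?(setIC q2) ?(setUC q2).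
move=> hq1 hq2 hf q12 fQ; have [_ _ q12y] := setI_set1P q12.
have fQv z : z \in f -> z \in q1 :|: q2 -> z = v.
  by move=> zf zQ; apply/set1P; rewrite -fQ inE zf.
have vf : v \in f by have := set11 v; rewrite -fQ inE => /andP [].
have [// | vy] := eqVneq v y; case: noP.
apply: (has_P_of_chain H3 hf hq1 hq2); last 1 first.
- apply/eqP; rewrite -subset0; apply/subsetP => z; rewrite inE => /andP [zf zq2].
  have zv : z = v by apply: fQv; rewrite // inE zq2 orbT.
  by move: vy; rewrite -zv (q12y z) ?eqxx // zv.
- apply: (@cards1_subset1 _ _ v); last by rewrite inE vf vq1.
  by apply/subsetP => z; rewrite !inE => /andP [zf zq1]; apply/eqP/fQv; rewrite // inE zq1.
- by rewrite q12 cards1.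
Qed.

Lemma meet_both_card_gt1 (e1 e2 q1 q2 f : {set V}) :
  e1 \in H -> e2 \in H -> q1 \in H -> q2 \in H -> f \in H ->
  (e1 :|: e2) :&: (q1 :|: q2) = set0 ->
  f :&: (e1 :|: e2) != set0 -> f :&: (q1 :|: q2) != set0 ->
  1 < #|f :&: (e1 :|: e2)| \/ 1 < #|f :&: (q1 :|: q2)|.
Proof.
move=> he1 he2 hq1 hq2 hf UQ; rewrite -!card_gt0 => fU fQ.
case: (ltnP 1 #|f :&: (e1 :|: e2)|) => [|fU1]; first by left.
case: (ltnP 1 #|f :&: (q1 :|: q2)|) => [|fQ1]; first by right.
case: noP; have fQ_1 : #|f :&: (q1 :|: q2)| = 1 by lia.
have [fe | fe] : #|f :&: e1| = 1 \/ #|f :&: e2| = 1 by apply: cards1_setIU; lia.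
- apply: (has_P_of_fan_chain H3 he1 hq1 hq2 hf _ _ fQ_1); last by rewrite setIC.
  by apply/eqP; rewrite -subset0 -UQ setSI ?subsetUl.
- apply: (has_P_of_fan_chain H3 he2 hq1 hq2 hf _ _ fQ_1); last by rewrite setIC.
  by apply/eqP; rewrite -subset0 -UQ setSI ?subsetUr.
Qed.

Lemma meet_card2_shape (e1 e2 q1 q2 f : {set V}) x y :
  e1 \in H -> e2 \in H -> q1 \in H -> q2 \in H -> f \in H ->
  e1 :&: e2 = [set x] -> q1 :&: q2 = [set y] ->
  (e1 :|: e2) :&: (q1 :|: q2) = set0 ->
  1 < #|f :&: (e1 :|: e2)| -> f :&: (q1 :|: q2) != set0 ->
  f = (e1 :\ x) :|: [set y] \/ f = (e2 :\ x) :|: [set y].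
Proof.
move=> he1 he2 hq1 hq2 hf e12 q12 UQ fU; rewrite -card_gt0 => fQ.
have := leq_card_setI_disjoint f UQ; rewrite (H3 hf) => fUQ.
have fU2 : #|f :&: (e1 :|: e2)| = 2 by lia.
have fQ1 : #|f :&: (q1 :|: q2)| = 1 by lia.
have fQy : f :&: (q1 :|: q2) = [set y].
  have /eqP/cards1P [v fQv] := fQ1.
  by rewrite fQv (single_meet_fan_center hq1 hq2 hf q12 fQv).
have no_single (e : {set V}) : e \in H -> e \subset e1 :|: e2 -> #|f :&: e| != 1.
  move=> he eU; apply/eqP => fe; apply: noP.
  apply: (has_P_of_fan_chain H3 he hq1 hq2 hf _ _ fQ1); last by rewrite setIC.
  by apply/eqP; rewrite -subset0 -UQ setSI.
have f_cover := setI_disjoint_cover (f := f) UQ; rewrite fU2 fQ1 fQy (H3 hf) in f_cover.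
have [fUe | fUe] := setIU_card2 (H3 he1) (H3 he2) e12 fU2
  (no_single e1 he1 (subsetUl _ _)) (no_single e2 he2 (subsetUr _ _));
  [left | right]; by rewrite -f_cover // fUe.
Qed.

End PFree.

Theorem mainTheorem9 (V : finType) (H : {set {set V}})
  (H3 : uniform3 H) (Hfree : PC_free H)
  (e1 e2 : {set V}) (x : V)
  (he1 : e1 \in H) (he2 : e2 \in H) (hx : e1 :&: e2 = [set x])
  (q1 q2 : {set V}) (y : V)
  (hq1 : q1 \in induced H (~: (e1 :|: e2)))
  (hq2 : q2 \in induced H (~: (e1 :|: e2)))
  (hy : q1 :&: q2 = [set y]) :
  n_meet_both H (e1 :|: e2) (q1 :|: q2) <= 4.
Proof.
have [noP _] := Hfree.
move: hq1 hq2; rewrite !inE => /andP [hq1 q1W] /andP [hq2 q2W].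
have UQ : (e1 :|: e2) :&: (q1 :|: q2) = set0.
  by apply/eqP; rewrite -subset0 -(setICr (e1 :|: e2)) setIS // subUset q1W.
have QU : (q1 :|: q2) :&: (e1 :|: e2) = set0 by rewrite setIC.
apply: leq_trans (subset_leq_card _) (card_size [:: (e1 :\ x) :|: [set y];
  (e2 :\ x) :|: [set y]; (q1 :\ y) :|: [set x]; (q2 :\ y) :|: [set x]]).
apply/subsetP => f; rewrite inE => /and3P [hf fU fQ].
have [fU_gt1 | fQ_gt1] := meet_both_card_gt1 H3 noP he1 he2 hq1 hq2 hf UQ fU fQ.
- have [-> | ->] := meet_card2_shape H3 noP he1 he2 hq1 hq2 hf hx hy UQ fU_gt1 fQ;
    by rewrite !inE eqxx ?orbT.
- have [-> | ->] := meet_card2_shape H3 noP hq1 hq2 he1 he2 hf hy hx QU fQ_gt1 fU;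
    by rewrite !inE eqxx ?orbT.
Qed.
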